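(* Let $T$ be a strongly consistent $\mathcal{L}$-theory in $RGL^*$. Then there exist a first-order language $\hat{\mathcal{L}}\supseteq\mathcal{L}$ and a maximally strongly consistent Henkin $\hat{\mathcal{L}}$-theory $\hat T$ with $T\subseteq\hat T$.
   Context: $\mathcal{L}$ is a first-order language with countably many predicate, function and constant symbols. Formulas of $RGL^*$ are built from atomic formulas and the nullary connectives $\bar r$ ($r\in[0,1]\cap\mathbb{Q}$, including $\bar0,\bar1$) by $\wedge,\to,\forall,\exists$; $\neg\varphi:=\varphi\to\bar1$, $\varphi\vee\psi:=((\varphi\to\psi)\to\psi)\wedge((\psi\to\varphi)\to\varphi)$, $\varphi\leftrightarrow\psi:=(\varphi\to\psi)\wedge(\psi\to\varphi)$. Proof system $\vdash$: all instances of (G1) $(\varphi\to\psi)\to((\psi\to\chi)\to(\varphi\to\chi))$; (G2) $(\varphi\wedge\psi)\to\varphi$; (G3) $(\varphi\wedge\psi)\to(\psi\wedge\varphi)$; (G4) $\varphi\to(\varphi\wedge\varphi)$; (G5) $(\varphi\to(\psi\to\chi))\leftrightarrow((\varphi\wedge\psi)\to\chi)$; (G6) $((\varphi\to\psi)\to\chi)\to(((\psi\to\varphi)\to\chi)\to\chi)$; (G7) $\bar1\to\varphi$; (G$\forall$1) $(\forall x\,\varphi(x))\to\varphi(t)$; (G$\forall$2) $\forall x(\psi\to\varphi(x))\to(\psi\to\forall x\,\varphi(x))$; (G$\forall$3) $\forall x(\psi\vee\varphi(x))\to(\psi\vee\forall x\,\varphi(x))$; (G$\exists$1) $\varphi(t)\to\exists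 x\,\varphi(x)$; (G$\exists$2) $\exists x(\psi\to\varphi(x))\to(\psi\to\exists x\,\varphi(x))$ (with $t$ substitutable for $x$ and $x$ not free in $\psi$); (RGL1) $(\bar r\wedge\bar s)\leftrightarrow\overline{\max\{r,s\}}$; (RGL2) $\bar r\to\bar s$ if $r\ge s$, $(\bar r\to\bar s)\leftrightarrow\bar s$ if $r<s$; (RGL3) $\neg\neg\bar r$ for $r<1$. Rules: modus ponens and generalization. A theory $T$ is strongly consistent if $T\nvdash\bar r$ for every rational $r\in(0,1]$; it is maximally strongly consistent (in its language) if it is strongly consistent and every strongly consistent theory $\Sigma\supseteq T$ in the same language equals $T$. A theory $T$ in a language $\mathcal{L}'$ is Henkin if whenever $T\nvdash\forall x\,\varphi(x)$, there is a constant symbol $c\in\mathcal{L}'$ with $T\nvdash\varphi(c)$. *)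

From mathcomp Require Import all_boot all_order all_algebra.
Set Implicit Arguments. Unset Strict Implicit. Unset Printing Implicit Defensive.
Import Order.TTheory GRing.Theory Num.Theory.

Record lang := Lang {
  Pred : Type; Func : Type; Const : Type;
  parity : Pred -> nat; farity : Func -> nat }.

Definition countable (X : Type) : Prop := exists f : X -> nat, injective f.

Definition countable_lang (L : lang) : Prop :=
  countable (Pred L) /\ countable (Func L) /\ countable (Const L).

Inductive term (L : lang) : Type :=
| Var : nat -> term L
| Cnst : Const L -> term L
| App : forall f : Func L, ('I_(farity f) -> term L) -> term L.
Arguments Var {L}. Arguments Cnst {L}. Arguments App {L}.

Definition unit_rat := {r : rat | ((0 <= r) && (r <= 1))%R}.

Inductive form (L : lang) : Type :=
| Atom : forall p : Pred L, ('I_(parity p) -> term L) -> form L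
| Cst : unit_rat -> form L
| And : form L -> form L -> form L
| Imp : form L -> form L -> form L
| All : nat -> form L -> form L
| Ex : nat -> form L -> form L.
Arguments Atom {L}. Arguments Cst {L}. Arguments And {L}. Arguments Imp {L}.
Arguments All {L}. Arguments Ex {L}.

Definition one_r : unit_rat := exist _ 1%R isT.
Definition Neg {L} (a : form L) : form L := Imp a (Cst one_r).
Definition Or {L} (a b : form L) : form L :=
  And (Imp (Imp a b) b) (Imp (Imp b a) a).
Definition Iff {L} (a b : form L) : form L := And (Imp a b) (Imp b a).

Fixpoint occurs_t {L} (x : nat) (t : term L) : Prop :=
  match t with
  | Var y => x = y
  | Cnst _ => False
  | App f a => exists i, occurs_t x (a i)
  end.

Fixpoint subst_t {L} (x : nat) (s : term L) (t : term L) : term L :=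
  match t with
  | Var y => if y == x then s else Var y
  | Cnst c => Cnst c
  | App f a => App f (fun i => subst_t x s (a i))
  end.

Fixpoint free {L} (x : nat) (phi : form L) : Prop :=
  match phi with
  | Atom p a => exists i, occurs_t x (a i)
  | Cst _ => False
  | And a b | Imp a b => free x a \/ free x b
  | All y a | Ex y a => x <> y /\ free x a
  end.

Fixpoint subst {L} (x : nat) (s : term L) (phi : form L) : form L :=
  match phi with
  | Atom p a => Atom p (fun i => subst_t x s (a i))
  | Cst r => Cst r
  | And a b => And (subst x s a) (subst x s b)
  | Imp a b => Imp (subst x s a) (subst x s b)
  | All y a => if y == x then All y a else All y (subst x s a)
  | Ex y a => if y == x then Ex y a else Ex y (subst x s a)
  end.

Fixpoint substitutable {L} (s : term L) (x : nat) (phi : form L) : Prop :=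
  match phi with
  | Atom _ _ | Cst _ => True
  | And a b | Imp a b => substitutable s x a /\ substitutable s x b
  | All y a => ~ free x (All y a) \/ (~ occurs_t y s /\ substitutable s x a)
  | Ex y a => ~ free x (Ex y a) \/ (~ occurs_t y s /\ substitutable s x a)
  end.

Definition theory (L : lang) := form L -> Prop.

Inductive prov {L} (T : theory L) : form L -> Prop :=
| P_hyp phi : T phi -> prov T phi
| P_G1 a b c : prov T (Imp (Imp a b) (Imp (Imp b c) (Imp a c)))
| P_G2 a b : prov T (Imp (And a b) a)
| P_G3 a b : prov T (Imp (And a b) (And b a))
| P_G4 a : prov T (Imp a (And a a))
| P_G5 a b c : prov T (Iff (Imp a (Imp b c)) (Imp (And a b) c))
| P_G6 a b c : prov T (Imp (Imp (Imp a b) c) (Imp (Imp (Imp b a) c) c))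
| P_G7 a : prov T (Imp (Cst one_r) a)
| P_Gall1 x phi t : substitutable t x phi ->
    prov T (Imp (All x phi) (subst x t phi))
| P_Gall2 x phi psi : ~ free x psi ->
    prov T (Imp (All x (Imp psi phi)) (Imp psi (All x phi)))
| P_Gall3 x phi psi : ~ free x psi ->
    prov T (Imp (All x (Or psi phi)) (Or psi (All x phi)))
| P_Gex1 x phi t : substitutable t x phi ->
    prov T (Imp (subst x t phi) (Ex x phi))
| P_Gex2 x phi psi : ~ free x psi ->
    prov T (Imp (Ex x (Imp psi phi)) (Imp psi (Ex x phi)))
| P_RGL1 (r s m : unit_rat) : sval m = Num.max (sval r) (sval s) ->
    prov T (Iff (And (Cst r) (Cst s)) (Cst m))
| P_RGL2a (r s : unit_rat) : (sval s <= sval r)%R -> prov T (Imp (Cst r) (Cst s))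
| P_RGL2b (r s : unit_rat) : (sval r < sval s)%R ->
    prov T (Iff (Imp (Cst r) (Cst s)) (Cst s))
| P_RGL3 (r : unit_rat) : (sval r < 1)%R -> prov T (Neg (Neg (Cst r)))
| P_MP a b : prov T a -> prov T (Imp a b) -> prov T b
| P_Gen x a : prov T a -> prov T (All x a).

Definition strongly_consistent {L} (T : theory L) : Prop :=
  forall r : unit_rat, (0 < sval r)%R -> ~ prov T (Cst r).

Definition max_strongly_consistent {L} (T : theory L) : Prop :=
  strongly_consistent T /\
  forall S : theory L, (forall phi, T phi -> S phi) -> strongly_consistent S ->
    forall phi, S phi <-> T phi.

Definition henkin {L} (T : theory L) : Prop :=
  forall x (phi : form L), ~ prov T (All x phi) ->
    exists c : Const L, ~ prov T (subst x (Cnst c) phi).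

(* L' extends L: injective, arity-preserving inclusion of symbols *)
Record lang_emb (L L' : lang) := {
  emb_P : Pred L -> Pred L';
  emb_F : Func L -> Func L';
  emb_C : Const L -> Const L';
  emb_P_inj : injective emb_P;
  emb_F_inj : injective emb_F;
  emb_C_inj : injective emb_C;
  emb_par : forall p, parity (emb_P p) = parity p;
  emb_far : forall f, farity (emb_F f) = farity f }.

Fixpoint tr_t {L L'} (e : lang_emb L L') (t : term L) : term L' :=
  match t with
  | Var n => Var n
  | Cnst c => Cnst (emb_C e c)
  | App f a => App (emb_F e f) (fun i => tr_t e (a (cast_ord (emb_far e f) i)))
  end.

Fixpoint tr {L L'} (e : lang_emb L L') (phi : form L) : form L' :=
  match phi with
  | Atom p a => Atom (emb_P e p) (fun i => tr_t e (a (cast_ord (emb_par e p) i)))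
  | Cst r => Cst r
  | And a b => And (tr e a) (tr e b)
  | Imp a b => Imp (tr e a) (tr e b)
  | All x a => All x (tr e a)
  | Ex x a => Ex x (tr e a)
  end.

(* Add new constants c_0, c_1, ... to the language and enumerate the pairs
   (x, phi). Stage m of a chain of strongly consistent theories handles the m-th
   pair: either the closed form of [forall x, phi] can be added, or it refutes
   some t > 0 and then [phi[c/x] -> t/2] is added for a constant c not used so
   far. The latter is harmless because in a refutation c can be replaced by a
   fresh variable, over which (G∀3) generalizes. Since proofs are finite, the
   union of the chain is strongly consistent; a Lindenbaum completion (adding,
   in turn, every formula that keeps strong consistency) is then maximal, and it
   is Henkin because it still contains, for every pair, [forall x, phi] or a
   witness [phi[c/x] -> r] with r > 0. Strong consistency of T itself survives
   the change of language by turning the new constants into fresh variables. *)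

From mathcomp Require Import all_boot all_order all_algebra lra zify.
From Stdlib Require Import FunctionalExtensionality ClassicalEpsilon Classical.
Set Implicit Arguments. Unset Strict Implicit. Unset Printing Implicit Defensive.
Import Order.TTheory GRing.Theory Num.Theory.

Section Syntax.
Variable L : lang.
Implicit Types (t s : term L) (phi : form L).

(* [vbound phi] is a strict upper bound on the variables occurring in [phi],
   bound ones included. *)
Fixpoint vbound_t t : nat :=
  match t with
  | Var n => n.+1
  | Cnst _ => 0
  | App f a => \max_(i < farity f) vbound_t (a i)
  end.

Fixpoint vbound phi : nat :=
  match phi with
  | Atom p a => \max_(i < parity p) vbound_t (a i)
  | Cst _ => 0
  | And a b | Imp a b => maxn (vbound a) (vbound b)
  | All y a | Ex y a => maxn y.+1 (vbound a)
  end.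

Lemma occurs_vbound_t y t : occurs_t y t -> y < vbound_t t.
Proof.
elim: t => [n|c|f a IH] //=; first by move=> ->.
move=> [i /IH Hi]; exact: leq_trans Hi (@leq_bigmax _ (fun i => vbound_t (a i)) i).
Qed.

Lemma free_vbound y phi : free y phi -> y < vbound phi.
Proof.
elim: phi => [p a|r|a IHa b IHb|a IHa b IHb|x a IHa|x a IHa] //=.
- move=> [i /occurs_vbound_t Hi].
  exact: leq_trans Hi (@leq_bigmax _ (fun i => vbound_t (a i)) i).
- by case=> [/IHa|/IHb] H; rewrite leq_max H ?orbT.
- by case=> [/IHa|/IHb] H; rewrite leq_max H ?orbT.
- by case=> _ /IHa H; rewrite leq_max H ?orbT.
- by case=> _ /IHa H; rewrite leq_max H ?orbT.
Qed.

Lemma vbound_notfree w phi : vbound phi <= w -> ~ free w phi.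
Proof. by move=> H /free_vbound; rewrite ltnNge H. Qed.

Lemma subst_t_notin x s t : ~ occurs_t x t -> subst_t x s t = t.
Proof.
elim: t => [n|c|f a IH] //=; first by case: eqP => // ->.
move=> H; congr App; apply: functional_extensionality => i.
by apply: IH => Hi; apply: H; exists i.
Qed.

Lemma subst_notfree x s phi : ~ free x phi -> subst x s phi = phi.
Proof.
elim: phi => [p a|r|a IHa b IHb|a IHa b IHb|y a IHa|y a IHa] //= H.
- congr Atom; apply: functional_extensionality => i.
  by apply: subst_t_notin => Hi; apply: H; exists i.
- by rewrite IHa ?IHb //; tauto.
- by rewrite IHa ?IHb //; tauto.
- by case: eqP => // /nesym Hxy; rewrite IHa // => Hf; apply: H.
- by case: eqP => // /nesym Hxy; rewrite IHa // => Hf; apply: H.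
Qed.

Lemma subst_t_var_id x t : subst_t x (Var x) t = t.
Proof.
elim: t => [n|c|f a IH] //=; first by case: eqP => // ->.
by congr App; apply: functional_extensionality => i.
Qed.

Lemma subst_var_id x phi : subst x (Var x) phi = phi.
Proof.
elim: phi => [p a|r|a IHa b IHb|a IHa b IHb|y a IHa|y a IHa] /=.
- by congr Atom; apply: functional_extensionality => i; apply: subst_t_var_id.
- by [].
- by rewrite IHa IHb.
- by rewrite IHa IHb.
- by case: eqP => //; rewrite IHa.
- by case: eqP => //; rewrite IHa.
Qed.

Lemma substitutable_var_id x phi : substitutable (Var x) x phi.
Proof.
elim: phi => [p a|r|a IHa b IHb|a IHa b IHb|y a IHa|y a IHa] //=; try tauto.
- by case: (eqVneq y x) => [->|/eqP Hyx]; [left; case|right].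
- by case: (eqVneq y x) => [->|/eqP Hyx]; [left; case|right].
Qed.

Lemma substitutable_fresh s x phi :
  (forall y, occurs_t y s -> vbound phi <= y) -> substitutable s x phi.
Proof.
have sub_max m n y : maxn m n <= y -> (m <= y) * (n <= y).
  by rewrite geq_max => /andP[].
elim: phi => [p a|r|a IHa b IHb|a IHa b IHb|y a IHa|y a IHa] //= H.
- by split; [apply: IHa|apply: IHb] => z /H /sub_max [].
- by split; [apply: IHa|apply: IHb] => z /H /sub_max [].
- right; split; first by move=> /H /sub_max []; rewrite ltnn.
  by apply: IHa => z /H /sub_max [].
- right; split; first by move=> /H /sub_max []; rewrite ltnn.
  by apply: IHa => z /H /sub_max [].
Qed.

Lemma occurs_subst_t y x s t :
  occurs_t y (subst_t x s t) -> (occurs_t y t /\ y <> x) \/ occurs_t y s.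
Proof.
elim: t => [n|c|f a IH] //=.
- by case: eqP => [->|/eqP Hnx /= Hy]; [right|left; split=> //; apply/eqP; rewrite Hy].
- by move=> [i /IH [[Hi Hyx]|Hs]]; [left; split=> //; exists i|right].
Qed.

Lemma free_subst y x s phi :
  free y (subst x s phi) -> (free y phi /\ y <> x) \/ occurs_t y s.
Proof.
elim: phi => [p a|r|a IHa b IHb|a IHa b IHb|z a IHa|z a IHa] //=.
- by move=> [i /occurs_subst_t [[Hi Hyx]|Hs]]; [left; split=> //; exists i|right].
- by case=> [/IHa|/IHb]; tauto.
- by case=> [/IHa|/IHb]; tauto.
- by case: eqP => [->|_] /= [Hyz Hf]; [left|move: Hf => /IHa]; tauto.
- by case: eqP => [->|_] /= [Hyz Hf]; [left|move: Hf => /IHa]; tauto.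
Qed.

Lemma subst_t_rename w x s t : vbound_t t <= w ->
  subst_t w s (subst_t x (Var w) t) = subst_t x s t.
Proof.
elim: t => [n|c|f a IH] //=.
- case: eqP => _ /=; first by rewrite eqxx.
  by case: eqP => // ->; rewrite ltnn.
- move=> H; congr App; apply: functional_extensionality => i; apply: IH.
  exact: leq_trans (@leq_bigmax _ (fun i => vbound_t (a i)) i) H.
Qed.

Lemma subst_rename w x s phi : vbound phi <= w ->
  subst w s (subst x (Var w) phi) = subst x s phi.
Proof.
elim: phi => [p a|r|a IHa b IHb|a IHa b IHb|y a IHa|y a IHa] //=.
- move=> H; congr Atom; apply: functional_extensionality => i; apply: subst_t_rename.
  exact: leq_trans (@leq_bigmax _ (fun i => vbound_t (a i)) i) H.
- by rewrite geq_max => /andP[H1 H2]; rewrite IHa ?IHb.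
- by rewrite geq_max => /andP[H1 H2]; rewrite IHa ?IHb.
- rewrite geq_max => /andP[H1 H2]; case: eqP => [->|_] /=.
    by case: eqP => // _; rewrite subst_notfree //; apply: vbound_notfree.
  by case: eqP => [Hy|_]; [move: H1; rewrite Hy ltnn|rewrite IHa].
- rewrite geq_max => /andP[H1 H2]; case: eqP => [->|_] /=.
    by case: eqP => // _; rewrite subst_notfree //; apply: vbound_notfree.
  by case: eqP => [Hy|_]; [move: H1; rewrite Hy ltnn|rewrite IHa].
Qed.

Lemma substitutable_rename w x s phi : vbound phi <= w ->
  substitutable s x phi -> substitutable s w (subst x (Var w) phi).
Proof.
elim: phi => [p a|r|a IHa b IHb|a IHa b IHb|y a IHa|y a IHa] //=.
- by rewrite geq_max => /andP[H1 H2] [Ha Hb]; split; [apply: IHa|apply: IHb].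
- by rewrite geq_max => /andP[H1 H2] [Ha Hb]; split; [apply: IHa|apply: IHb].
- rewrite geq_max => /andP[H1 H2]; case: eqP => [->|/eqP Hyx] /=.
    by move=> _; left=> -[_ /(vbound_notfree H2)].
  case=> [Hnf|[Hno Hs]]; last by right; split=> //; apply: IHa.
  left=> -[_]; rewrite subst_notfree; first exact: vbound_notfree.
  by move=> Hf; apply: Hnf; split=> // Hxy; move: Hyx; rewrite Hxy eqxx.
- rewrite geq_max => /andP[H1 H2]; case: eqP => [->|/eqP Hyx] /=.
    by move=> _; left=> -[_ /(vbound_notfree H2)].
  case=> [Hnf|[Hno Hs]]; last by right; split=> //; apply: IHa.
  left=> -[_]; rewrite subst_notfree; first exact: vbound_notfree.
  by move=> Hf; apply: Hnf; split=> // Hxy; move: Hyx; rewrite Hxy eqxx.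
Qed.

Lemma free_alls y phi l : free y (foldr All phi l) -> y \notin l /\ free y phi.
Proof.
elim: l => [|z l IH] //= [Hyz /IH [Hl Hf]]; split=> //.
by rewrite in_cons negb_or Hl andbT; apply/eqP.
Qed.

Lemma subst_alls x s phi l : x \notin l ->
  subst x s (foldr All phi l) = foldr All (subst x s phi) l.
Proof.
elim: l => [|z l IH] //=; rewrite in_cons negb_or => /andP[Hxz Hl].
by rewrite eq_sym (negbTE Hxz) IH.
Qed.

Definition close_but x phi : form L :=
  foldr All phi [seq y <- iota 0 (vbound phi) | y != x].

Lemma free_close_but x y phi : free y (close_but x phi) -> y = x.
Proof.
move=> /free_alls [Hl Hf]; apply/eqP; move: Hl.
by rewrite mem_filter mem_iota /= (free_vbound Hf) andbT negbK.
Qed.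

Lemma subst_close_but x s phi :
  subst x s (close_but x phi) =
  foldr All (subst x s phi) [seq y <- iota 0 (vbound phi) | y != x].
Proof. by rewrite subst_alls // mem_filter eqxx. Qed.

End Syntax.

Section Provability.
Variable L : lang.
Implicit Types (H : theory L) (a b c : form L).

Lemma prov_iffl H a b : prov H (Iff a b) -> prov H (Imp a b).
Proof. by move=> h; apply: P_MP h (P_G2 _ _ _). Qed.

Lemma prov_iffr H a b : prov H (Iff a b) -> prov H (Imp b a).
Proof. by move=> h; apply: P_MP (P_MP h (P_G3 _ _ _)) (P_G2 _ _ _). Qed.

Lemma prov_trans H a b c :
  prov H (Imp a b) -> prov H (Imp b c) -> prov H (Imp a c).
Proof. by move=> h1 h2; apply: P_MP h2 (P_MP h1 (P_G1 _ _ _ _)). Qed.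

Lemma prov_refl H a : prov H (Imp a a).
Proof. exact: prov_trans (P_G4 _ a) (P_G2 _ _ _). Qed.

Lemma prov_weaken H a b : prov H a -> prov H (Imp b a).
Proof. by move=> h; apply: P_MP h (P_MP (P_G2 H a b) (prov_iffr (P_G5 H a b a))). Qed.

Lemma prov_and H a b : prov H a -> prov H b -> prov H (And a b).
Proof.
move=> ha hb; have h := P_MP (prov_refl H (And a b)) (prov_iffr (P_G5 H a b _)).
exact: P_MP hb (P_MP ha h).
Qed.

Lemma prov_exch H a b c :
  prov H (Imp a (Imp b c)) -> prov H (Imp b (Imp a c)).
Proof.
move=> h; have h1 := prov_trans (P_G3 H b a) (P_MP h (prov_iffl (P_G5 H a b c))).
exact: P_MP h1 (prov_iffr (P_G5 H b a c)).
Qed.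

Lemma prov_prefix H a b c :
  prov H (Imp b c) -> prov H (Imp (Imp a b) (Imp a c)).
Proof. by move=> h; apply: P_MP h (prov_exch (P_G1 H a b c)). Qed.

Lemma prov_suffix H a b c :
  prov H (Imp a b) -> prov H (Imp (Imp b c) (Imp a c)).
Proof. by move=> h; apply: P_MP h (P_G1 H a b c). Qed.

Lemma prov_contract H a b : prov H (Imp a (Imp a b)) -> prov H (Imp a b).
Proof. by move=> h; apply: prov_trans (P_G4 H a) (P_MP h (prov_iffl (P_G5 H a a b))). Qed.

Lemma prov_mp_under H a b c :
  prov H (Imp a b) -> prov H (Imp a (Imp b c)) -> prov H (Imp a c).
Proof. by move=> h1 h2; apply: prov_contract; apply: prov_trans h1 (prov_exch h2). Qed.

Lemma prov_or_elim_self H a b : prov H (Or a b) -> prov H (Imp b a) -> prov H a.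
Proof. by move=> h hba; apply: P_MP hba (P_MP (P_MP h (P_G3 _ _ _)) (P_G2 _ _ _)). Qed.

Lemma prov_mono H1 H2 phi :
  (forall psi, H1 psi -> H2 psi) -> prov H1 phi -> prov H2 phi.
Proof.
move=> Hs; elim; try by constructor.
- by move=> ? /Hs; constructor.
- by move=> a b _ ha _ hb; apply: P_MP ha hb.
Qed.

Lemma prov_inst H x phi : prov H (All x phi) -> prov H phi.
Proof.
by move=> h; have := P_MP h (P_Gall1 H (substitutable_var_id x phi)); rewrite subst_var_id.
Qed.

Lemma prov_alls_elim H phi l : prov H (foldr All phi l) -> prov H phi.
Proof. by elim: l => [|z l IH] //= /prov_inst. Qed.

Lemma prov_alls_intro H phi l : prov H phi -> prov H (foldr All phi l).
Proof. by elim: l => [|z l IH] //= h; apply: P_Gen (IH h). Qed.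

Definition extend H a : theory L := fun psi => H psi \/ psi = a.
Definition closed a := forall y, ~ free y a.

Lemma deduction H a phi : closed a -> prov (extend H a) phi -> prov H (Imp a phi).
Proof.
move=> Ha; elim; try by move=> *; apply: prov_weaken; constructor.
- by move=> psi [h|->]; [apply: prov_weaken; apply: P_hyp|apply: prov_refl].
- by move=> b c _ hb _ hc; apply: prov_mp_under hb hc.
- by move=> x b _ hb; apply: P_MP (P_Gen x hb) (P_Gall2 _ _ (Ha x)).
Qed.

Lemma prov_or_of_imp_cst H a (r u : unit_rat) : (sval u <= sval r)%R ->
  prov H (Imp (Imp a (Cst r)) (Cst u)) -> prov H (Or (Cst u) (Imp (Cst r) a)).
Proof.
move=> Hur h; apply: prov_and; last exact: P_MP h (P_G6 H a (Cst r) (Cst u)).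
apply: prov_trans (prov_iffl (P_G5 H (Cst u) (Cst r) a)) _.
by apply: prov_suffix; apply: prov_iffr (P_RGL1 H (m:=r) _); rewrite max_r.
Qed.

Section ChainUnion.
Variable Hn : nat -> theory L.
Hypothesis Hn_chain : forall n psi, Hn n psi -> Hn n.+1 psi.

Lemma chain_mono n m psi : n <= m -> Hn n psi -> Hn m psi.
Proof. by move=> /subnK <-; elim: (m - n) => //= k IH /IH; apply: Hn_chain. Qed.

Lemma prov_chain_union phi :
  prov (fun psi => exists n, Hn n psi) phi -> exists n, prov (Hn n) phi.
Proof.
elim; try by exists 0; constructor.
all: try by move=> r s m Hm; exists 0; apply: (P_RGL1 _ Hm).
all: try by move=> r s Hm; exists 0; apply: (P_RGL2b _ Hm).
- by move=> psi [n Hpsi]; exists n; constructor.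
- move=> a b _ [n1 h1] _ [n2 h2]; exists (maxn n1 n2); apply: P_MP.
    by apply: prov_mono h1 => psi; apply: chain_mono; apply: leq_maxl.
  by apply: prov_mono h2 => psi; apply: chain_mono; apply: leq_maxr.
- by move=> x a _ [n h]; exists n; apply: P_Gen.
Qed.

Lemma sc_chain_union : (forall n, strongly_consistent (Hn n)) ->
  strongly_consistent (fun psi => exists n, Hn n psi).
Proof. by move=> HS r Hr /prov_chain_union [n h]; apply: HS n r Hr h. Qed.

End ChainUnion.
End Provability.

Section ConstSubst.
Variables (P F : Type) (pa : P -> nat) (fa : F -> nat).
Local Notation LL C := (@Lang P F C pa fa).
Variables (C1 C2 : Type).

Definition vars_ge (N : nat) (s : C1 -> term (LL C2)) :=
  forall c y, occurs_t y (s c) -> N <= y.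

Lemma vars_ge_notin N s z : vars_ge N s -> z < N -> forall c, ~ occurs_t z (s c).
Proof. by move=> Hs Hz c /Hs; rewrite leqNgt Hz. Qed.

Section Fix.
Variable s : C1 -> term (LL C2).

Fixpoint csubst_t (t : term (LL C1)) : term (LL C2) :=
  match t with
  | Var n => Var n
  | Cnst c => s c
  | App f a => @App (LL C2) f (fun i => csubst_t (a i))
  end.

Fixpoint csubst (phi : form (LL C1)) : form (LL C2) :=
  match phi with
  | Atom p a => @Atom (LL C2) p (fun i => csubst_t (a i))
  | Cst r => Cst r
  | And a b => And (csubst a) (csubst b)
  | Imp a b => Imp (csubst a) (csubst b)
  | All y a => All y (csubst a)
  | Ex y a => Ex y (csubst a)
  end.

Lemma occurs_csubst_t y t :
  occurs_t y (csubst_t t) -> occurs_t y t \/ exists c, occurs_t y (s c).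
Proof.
elim: t => [n|c|f a IH] /=; [by left|by right; exists c|].
by move=> [i /IH [Hi|Hc]]; [left; exists i|right].
Qed.

Lemma free_csubst x phi :
  (forall c, ~ occurs_t x (s c)) -> free x (csubst phi) -> free x phi.
Proof.
move=> Hs; elim: phi => [p a|r|a IHa b IHb|a IHa b IHb|y a IHa|y a IHa] //=.
- by move=> [i /occurs_csubst_t [Hi|[c /Hs]]] //; exists i.
- by case=> [/IHa|/IHb]; tauto.
- by case=> [/IHa|/IHb]; tauto.
- by case=> ? /IHa.
- by case=> ? /IHa.
Qed.

Lemma csubst_subst_t x u t : (forall c, ~ occurs_t x (s c)) ->
  csubst_t (subst_t x u t) = subst_t x (csubst_t u) (csubst_t t).
Proof.
move=> Hs; elim: t => [n|c|f a IH] /=; first by case: eqP.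
  by rewrite subst_t_notin.
by congr App; apply: functional_extensionality => i.
Qed.

Lemma csubst_subst x u phi : (forall c, ~ occurs_t x (s c)) ->
  csubst (subst x u phi) = subst x (csubst_t u) (csubst phi).
Proof.
move=> Hs; elim: phi => [p a|r|a IHa b IHb|a IHa b IHb|y a IHa|y a IHa] /=.
- by congr Atom; apply: functional_extensionality => i; apply: csubst_subst_t.
- by [].
- by rewrite IHa IHb.
- by rewrite IHa IHb.
- by case: eqP => _ //=; rewrite IHa.
- by case: eqP => _ //=; rewrite IHa.
Qed.

Lemma substitutable_csubst N x u phi : vars_ge N s ->
  vbound phi <= N -> x < N -> substitutable u x phi ->
  substitutable (csubst_t u) x (csubst phi).
Proof.
move=> Hs; elim: phi => [p a|r|a IHa b IHb|a IHa b IHb|y a IHa|y a IHa] //=.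
- by rewrite geq_max => /andP[H1 H2] HxN [Ha Hb]; split; [apply: IHa|apply: IHb].
- by rewrite geq_max => /andP[H1 H2] HxN [Ha Hb]; split; [apply: IHa|apply: IHb].
- rewrite geq_max => /andP[H1 H2] HxN [Hnf|[Hno Hsub]].
    by left=> -[Hxy /(free_csubst (vars_ge_notin Hs HxN)) Hf]; apply: Hnf.
  right; split; last exact: IHa.
  by move=> /occurs_csubst_t [//|[c /Hs]]; rewrite leqNgt H1.
- rewrite geq_max => /andP[H1 H2] HxN [Hnf|[Hno Hsub]].
    by left=> -[Hxy /(free_csubst (vars_ge_notin Hs HxN)) Hf]; apply: Hnf.
  right; split; last exact: IHa.
  by move=> /occurs_csubst_t [//|[c /Hs]]; rewrite leqNgt H1.
Qed.

End Fix.

Lemma vars_ge_max N1 N2 s : vars_ge (maxn N1 N2) s -> vars_ge N1 s /\ vars_ge N2 s.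
Proof. by move=> Hs; split=> c y /Hs; rewrite geq_max => /andP[]. Qed.

(* Replacing constants by terms preserves provability, provided the variables
   of these terms avoid the (finitely many) variables the proof relies on. *)
Lemma prov_csubst (T1 : theory (LL C1)) (T2 : theory (LL C2)) phi : prov T1 phi ->
  exists N, forall s, vars_ge N s ->
    (forall psi, T1 psi -> T2 (csubst s psi)) -> prov T2 (csubst s phi).
Proof.
elim; try by exists 0 => s _ _; rewrite /Iff /Neg /Or /=; constructor.
all: try by move=> r s0 m Hm; exists 0 => s _ _ /=; apply: (P_RGL1 _ Hm).
all: try by move=> r s0 Hm; exists 0 => s _ _ /=; apply: (P_RGL2b _ Hm).
all: try by move=> r s0 Hm; exists 0 => s _ _ /=; apply: (P_RGL2a _ Hm).
all: try by move=> r Hm; exists 0 => s _ _ /=; apply: (P_RGL3 _ Hm).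
- by move=> psi Hpsi; exists 0 => s _ HT; apply: P_hyp; apply: HT.
- move=> x phi0 t Hsub; exists (maxn x.+1 (vbound phi0)) => s Hs _ /=.
  rewrite csubst_subst; last by apply: (vars_ge_notin Hs); rewrite leq_max leqnn.
  by apply: P_Gall1; apply: (substitutable_csubst Hs); rewrite ?leq_max ?leqnn ?orbT.
- move=> x phi0 psi Hnf; exists x.+1 => s Hs _ /=.
  by apply: P_Gall2 => /(free_csubst (vars_ge_notin Hs (leqnn _))).
- move=> x phi0 psi Hnf; exists x.+1 => s Hs _ /=.
  by apply: P_Gall3 => /(free_csubst (vars_ge_notin Hs (leqnn _))).
- move=> x phi0 t Hsub; exists (maxn x.+1 (vbound phi0)) => s Hs _ /=.
  rewrite csubst_subst; last by apply: (vars_ge_notin Hs); rewrite leq_max leqnn.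
  by apply: P_Gex1; apply: (substitutable_csubst Hs); rewrite ?leq_max ?leqnn ?orbT.
- move=> x phi0 psi Hnf; exists x.+1 => s Hs _ /=.
  by apply: P_Gex2 => /(free_csubst (vars_ge_notin Hs (leqnn _))).
- move=> a b _ [N1 H1] _ [N2 H2]; exists (maxn N1 N2) => s /vars_ge_max [Hs1 Hs2] HT.
  exact: P_MP (H1 s Hs1 HT) (H2 s Hs2 HT).
- by move=> x a _ [N H]; exists N => s Hs HT /=; apply: P_Gen (H s Hs HT).
Qed.

End ConstSubst.

Section HenkinStep.
Variables (P F C : Type) (pa : P -> nat) (fa : F -> nat).
Local Notation L2 := (@Lang P F (C + nat) pa fa).
Implicit Types (H : theory L2) (t u : term L2) (phi : form L2).

(* The constants [inr j] are the new ones; [cbound phi] is a strict upper bound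
   on the indices [j] of the new constants occurring in [phi]. *)
Fixpoint cbound_t t : nat :=
  match t with
  | Var _ | Cnst (inl _) => 0
  | Cnst (inr j) => j.+1
  | App f a => \max_(i < fa f) cbound_t (a i)
  end.

Fixpoint cbound phi : nat :=
  match phi with
  | Atom p a => \max_(i < pa p) cbound_t (a i)
  | Cst _ => 0
  | And a b | Imp a b => maxn (cbound a) (cbound b)
  | All _ a | Ex _ a => cbound a
  end.

Definition bounded H k := forall psi, H psi -> cbound psi <= k.

Lemma cbound_subst_t x u t : cbound_t (subst_t x u t) <= maxn (cbound_t t) (cbound_t u).
Proof.
elim: t => [n|[c|j]|f a IH] /=; first by case: eqP; rewrite leq_max leqnn ?orbT.
- by [].
- by rewrite leq_max leqnn.
apply/bigmax_leqP => i _; have := IH i.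
by have /= := @leq_bigmax _ (fun i => cbound_t (a i)) i; lia.
Qed.

Lemma cbound_subst x u phi : cbound (subst x u phi) <= maxn (cbound phi) (cbound_t u).
Proof.
elim: phi => [p a|r|a IHa b IHb|a IHa b IHb|y a IHa|y a IHa] /=.
- apply/bigmax_leqP => i _; have := cbound_subst_t x u (a i).
  by have /= := @leq_bigmax _ (fun i => cbound_t (a i)) i; lia.
- by [].
- by move: IHa IHb; lia.
- by move: IHa IHb; lia.
- by case: eqP => _ /=; lia.
- by case: eqP => _ /=; lia.
Qed.

Lemma cbound_alls phi l : cbound (foldr All phi l) = cbound phi.
Proof. by elim: l. Qed.

Definition const_to_var k w (d : C + nat) : term L2 :=
  match d with
  | inl c => @Cnst L2 (inl c)
  | inr j => if j == k then Var w else @Cnst L2 (inr j)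
  end.

Lemma vars_ge_const_to_var k w : vars_ge w (const_to_var k w).
Proof. by move=> [c|j] y //=; case: eqP => //= _ ->. Qed.

Lemma csubst_const_to_var_t k w t : cbound_t t <= k -> csubst_t (const_to_var k w) t = t.
Proof.
elim: t => [n|[c|j]|f a IH] //=; first by case: eqP => // ->; rewrite ltnn.
move=> H; congr App; apply: functional_extensionality => i; apply: IH.
exact: leq_trans (@leq_bigmax _ (fun i => cbound_t (a i)) i) H.
Qed.

Lemma csubst_const_to_var k w phi : cbound phi <= k -> csubst (const_to_var k w) phi = phi.
Proof.
elim: phi => [p a|r|a IHa b IHb|a IHa b IHb|y a IHa|y a IHa] //=.
- move=> H; congr Atom; apply: functional_extensionality => i; apply: csubst_const_to_var_t.
  exact: leq_trans (@leq_bigmax _ (fun i => cbound_t (a i)) i) H.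
- by rewrite geq_max => /andP[H1 H2]; rewrite IHa ?IHb.
- by rewrite geq_max => /andP[H1 H2]; rewrite IHa ?IHb.
- by move=> H; rewrite IHa.
- by move=> H; rewrite IHa.
Qed.

Lemma prov_const_to_var H k phi : bounded H k -> prov H phi ->
  exists N, forall w, N <= w -> prov H (csubst (const_to_var k w) phi).
Proof.
move=> Hk /(prov_csubst H) [N HN]; exists N => w HNw; apply: HN => [c y|psi Hpsi].
  by move=> /vars_ge_const_to_var; apply: leq_trans.
by rewrite csubst_const_to_var //; apply: Hk.
Qed.

(* [henkin_all x phi] is the closed formula [forall z, (close_but x phi)[z/x]];
   the fresh variable [z] is needed because [x] may occur bound in [phi]. *)
Definition henkin_all x phi : form L2 :=
  let z := vbound (close_but x phi) in All z (subst x (Var z) (close_but x phi)).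

Definition henkin_witness x phi k (r : unit_rat) : form L2 :=
  Imp (subst x (@Cnst L2 (inr k)) (close_but x phi)) (Cst r).

Lemma henkin_all_closed x phi : closed (henkin_all x phi).
Proof.
by move=> y /= [Hyz /free_subst [[/free_close_but Hyx Hxy]|Hy]]; [apply: Hxy|apply: Hyz].
Qed.

Lemma henkin_witness_closed x phi k r : closed (henkin_witness x phi k r).
Proof. by move=> y /= [/free_subst [[/free_close_but Hyx Hxy]|]|]; first apply: Hxy. Qed.

Lemma cbound_henkin_all x phi : cbound (henkin_all x phi) <= cbound phi.
Proof. by apply: leq_trans (cbound_subst _ _ _) _; rewrite cbound_alls maxn0. Qed.

Lemma cbound_henkin_witness x phi k r :
  cbound (henkin_witness x phi k r) <= maxn (cbound phi) k.+1.
Proof. by rewrite /= maxn0; apply: leq_trans (cbound_subst _ _ _) _; rewrite cbound_alls. Qed.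

Lemma prov_henkin_all H x phi : prov H (henkin_all x phi) -> prov H (All x phi).
Proof.
set psi := close_but x phi => h; apply: P_Gen.
apply: (@prov_alls_elim _ _ _ [seq y <- iota 0 (vbound phi) | y != x]).
have Hsub := substitutable_rename (leqnn (vbound psi)) (substitutable_var_id x psi).
by have := P_MP h (P_Gall1 H Hsub); rewrite subst_rename // subst_var_id.
Qed.

Lemma prov_henkin_all_rename H x phi w : vbound (close_but x phi) <= w ->
  prov H (Imp (All w (subst x (Var w) (close_but x phi))) (henkin_all x phi)).
Proof.
set psi := close_but x phi; set z := vbound psi => Hw.
have Hsub : substitutable (Var z) w (subst x (Var w) psi).
  by apply: substitutable_rename => //; apply: substitutable_fresh => y /= ->.
have := P_Gall1 H Hsub; rewrite subst_rename // => h.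
apply: P_MP (P_Gen z h) (P_Gall2 _ _ _) => /= -[Hzw /free_subst [[Hf _]|]] //.
exact: vbound_notfree (leqnn z) Hf.
Qed.

Lemma csubst_henkin_witness x phi k w r : x < w -> cbound phi <= k ->
  csubst (const_to_var k w) (henkin_witness x phi k r) =
  Imp (subst x (Var w) (close_but x phi)) (Cst r).
Proof.
move=> Hxw Hk; rewrite /= csubst_subst /= ?eqxx ?csubst_const_to_var ?cbound_alls //.
by move=> c /vars_ge_const_to_var; rewrite leqNgt Hxw.
Qed.

(* A refutation [u <= r] of [phi[c_k/x] -> r], with [c_k] turned into a fresh
   variable [w], proves [(A w -> r) -> u], that is [u \/ (r -> A w)]; by (G∀3)
   also [u \/ forall w, (r -> A w)], whose second disjunct implies [r -> t] and
   hence [u]. *)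
Lemma sc_extend_witness H x phi k (r t : unit_rat) :
  strongly_consistent H -> bounded H k -> cbound phi <= k ->
  (0 < sval r)%R -> (sval r < sval t)%R ->
  prov (extend H (henkin_all x phi)) (Cst t) ->
  strongly_consistent (extend H (henkin_witness x phi k r)).
Proof.
move=> SC Hk Hphi Hr Hrt Ht s Hs Hws.
have [u [Hu Hus Hur]] : exists u : unit_rat,
    [/\ (0 < sval u)%R, (sval u <= sval s)%R & (sval u <= sval r)%R].
  by case: (lerP (sval s) (sval r)) => ?; [exists s|exists r]; split=> //; apply: ltW.
have hwu := prov_trans (deduction (@henkin_witness_closed x phi k r) Hws) (P_RGL2a H Hus).
have [N HN] := prov_const_to_var Hk hwu.
set psi := close_but x phi; pose w := maxn N (maxn (vbound psi) x.+1).
set A := subst x (Var w) psi.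
have hA : prov H (Imp (Imp A (Cst r)) (Cst u)).
  have : prov H (Imp (csubst (const_to_var k w) (henkin_witness x phi k r)) (Cst u)).
    exact: HN w (leq_maxl _ _).
  by rewrite csubst_henkin_witness //; lia.
have hOr : prov H (Or (Cst u) (All w (Imp (Cst r) A))).
  by apply: P_MP (P_Gen w (prov_or_of_imp_cst Hur hA)) (P_Gall3 _ _ _).
have hrA : prov H (Imp (All w (Imp (Cst r) A)) (Cst u)).
  apply: prov_trans (P_Gall2 _ _ _) _; first by [].
  apply: prov_trans (prov_prefix (Cst r) (prov_henkin_all_rename H _)) _.
    by rewrite -/psi /w; lia.
  apply: prov_trans (prov_prefix (Cst r) (deduction (@henkin_all_closed x phi) Ht)) _.
  apply: prov_trans (prov_iffl (P_RGL2b H Hrt)) (P_RGL2a H _).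
  exact: le_trans Hur (ltW Hrt).
exact: SC u Hu (prov_or_elim_self hOr hrA).
Qed.

Definition witnessed H := forall x phi, H (henkin_all x phi) \/
  exists k (r : unit_rat), (0 < sval r)%R /\ H (henkin_witness x phi k r).

Lemma witnessed_sub H H' :
  (forall psi, H psi -> H' psi) -> witnessed H -> witnessed H'.
Proof.
move=> HH' Hw x phi; case: (Hw x phi) => [/HH'|[k [r [Hr /HH']]]]; first by left.
by right; exists k, r.
Qed.

Lemma henkin_of_witnessed H : witnessed H -> strongly_consistent H -> henkin H.
Proof.
move=> Hw SC x phi Hn; case: (Hw x phi) => [Hall|[k [r [Hr Hwit]]]].
  by case: Hn; apply: prov_henkin_all; apply: P_hyp.
exists (inr k) => h; apply: (SC r Hr); apply: P_MP (P_hyp Hwit).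
by rewrite subst_close_but; apply: prov_alls_intro.
Qed.

Lemma half_subproof (t : unit_rat) : ((0 <= sval t / 2) && (sval t / 2 <= 1))%R.
Proof. by case/andP: (svalP t) => h0 h1; apply/andP; split; lra. Qed.

Definition half (t : unit_rat) : unit_rat := exist _ (sval t / 2)%R (half_subproof t).

Definition refuting_cst H a : unit_rat :=
  epsilon (inhabits one_r) (fun t : unit_rat => (0 < sval t)%R /\ prov (extend H a) (Cst t)).

Lemma refuting_cst_spec H a : ~ strongly_consistent (extend H a) ->
  (0 < sval (refuting_cst H a))%R /\ prov (extend H a) (Cst (refuting_cst H a)).
Proof.
move=> Hn; have Hex : exists t : unit_rat, (0 < sval t)%R /\ prov (extend H a) (Cst t).
  by apply: NNPP => Hne; apply: Hn => t Ht Hp; apply: Hne; exists t.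
exact: epsilon_spec Hex.
Qed.

(* Meant for [k] with [bounded H k], so that the constant [inr k] is fresh. *)
Definition henkin_add H x phi k : form L2 :=
  if excluded_middle_informative (strongly_consistent (extend H (henkin_all x phi)))
  then henkin_all x phi
  else henkin_witness x phi k (half (refuting_cst H (henkin_all x phi))).

Lemma henkin_add_sc H x phi k :
  strongly_consistent H -> bounded H k -> cbound phi <= k ->
  strongly_consistent (extend H (henkin_add H x phi k)).
Proof.
rewrite /henkin_add; case: excluded_middle_informative => // Hn SC Hk Hphi.
have [Ht Hp] := refuting_cst_spec Hn.
by apply: (sc_extend_witness SC Hk Hphi _ _ Hp) => /=; lra.
Qed.

Lemma henkin_add_spec H x phi k :
  henkin_add H x phi k = henkin_all x phi \/ exists r : unit_rat,
    (0 < sval r)%R /\ henkin_add H x phi k = henkin_witness x phi k r.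
Proof.
rewrite /henkin_add; case: excluded_middle_informative => Hn; [by left|right].
have [Ht _] := refuting_cst_spec Hn.
by eexists; split; last reflexivity; rewrite /=; lra.
Qed.

Lemma cbound_henkin_add H x phi k :
  cbound (henkin_add H x phi k) <= maxn (cbound phi) k.+1.
Proof.
case: (henkin_add_spec H x phi k) => [->|[r [_ ->]]]; last exact: cbound_henkin_witness.
exact: leq_trans (cbound_henkin_all x phi) (leq_maxl _ _).
Qed.

End HenkinStep.

Section Encoding.
Variable L : lang.
Variables (gp : Pred L -> nat) (gf : Func L -> nat) (gc : Const L -> nat).
Hypotheses (gp_inj : injective gp) (gf_inj : injective gf) (gc_inj : injective gc).

Fixpoint tree_of_term (t : term L) : GenTree.tree nat :=
  match t with
  | Var n => GenTree.Node 0 [:: GenTree.Leaf n]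
  | Cnst c => GenTree.Node 1 [:: GenTree.Leaf (gc c)]
  | App f a => GenTree.Node 2
      (GenTree.Leaf (gf f) :: [seq tree_of_term (a i) | i <- enum 'I_(farity f)])
  end.

Fixpoint tree_of_form (phi : form L) : GenTree.tree nat :=
  match phi with
  | Atom p a => GenTree.Node 0
      (GenTree.Leaf (gp p) :: [seq tree_of_term (a i) | i <- enum 'I_(parity p)])
  | Cst r => GenTree.Node 1 [:: GenTree.Leaf (pickle (sval r))]
  | And a b => GenTree.Node 2 [:: tree_of_form a; tree_of_form b]
  | Imp a b => GenTree.Node 3 [:: tree_of_form a; tree_of_form b]
  | All y a => GenTree.Node 4 [:: GenTree.Leaf y; tree_of_form a]
  | Ex y a => GenTree.Node 5 [:: GenTree.Leaf y; tree_of_form a]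
  end.

Lemma tree_of_term_inj : injective tree_of_term.
Proof.
elim=> [n|c|f a IH] [n'|c'|f' a'] //=; [by case=> ->|by case=> /gc_inj ->|].
case=> /gf_inj Hf; subst f' => /eq_in_map Ha; congr App.
by apply: functional_extensionality => i; apply: IH; apply: Ha; rewrite mem_enum.
Qed.

Lemma tree_of_form_inj : injective tree_of_form.
Proof.
elim=> [p a|r|a IHa b IHb|a IHa b IHb|y a IHa|y a IHa]
       [p' a'|r'|a' b'|a' b'|y' a'|y' a'] //=.
- case=> /gp_inj Hp; subst p' => /eq_in_map Ha; congr Atom.
  by apply: functional_extensionality => i; apply: tree_of_term_inj; apply: Ha; rewrite mem_enum.
- by case=> /(pcan_inj pickleK) /val_inj ->.
- by case=> /IHa -> /IHb ->.
- by case=> /IHa -> /IHb ->.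
- by case=> -> /IHa ->.
- by case=> -> /IHa ->.
Qed.

Definition form_code (phi : form L) : nat := pickle (tree_of_form phi).

Lemma form_code_inj : injective form_code.
Proof. by move=> a b /(pcan_inj pickleK) /tree_of_form_inj. Qed.

End Encoding.

Section Lindenbaum.
Variable L : lang.
Variable code : form L -> nat.
Hypothesis code_inj : injective code.
Variable H : theory L.
Hypothesis H_sc : strongly_consistent H.

Fixpoint lindenbaum_chain n : theory L :=
  match n with
  | 0 => H
  | k.+1 => fun psi => lindenbaum_chain k psi \/
      (code psi = k /\ strongly_consistent (extend (lindenbaum_chain k) psi))
  end.

Definition lindenbaum : theory L := fun psi => exists n, lindenbaum_chain n psi.

Lemma lindenbaum_chain_sc n : strongly_consistent (lindenbaum_chain n).
Proof.
elim: n => [|n IH] //=.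
case: (classic (exists psi, code psi = n /\ strongly_consistent (extend (lindenbaum_chain n) psi))).
  move=> [psi [Hc HS]] r Hr h; apply: (HS r Hr); apply: prov_mono h => th [|[Hth _]].
    by left.
  by right; apply: code_inj; rewrite Hth Hc.
move=> Hne r Hr h; apply: (IH r Hr); apply: prov_mono h => th [//|Hth].
by case: Hne; exists th.
Qed.

Lemma lindenbaum_sub psi : H psi -> lindenbaum psi.
Proof. by exists 0. Qed.

Lemma lindenbaum_max : max_strongly_consistent lindenbaum.
Proof.
have SC : strongly_consistent lindenbaum.
  by apply: sc_chain_union => [n psi|]; [left|apply: lindenbaum_chain_sc].
split=> // S HS S_sc phi; split=> [Sphi|]; last exact: HS.
exists (code phi).+1; right; split=> // r Hr h; apply: (S_sc r Hr).
by apply: prov_mono h => th [Hth|->] //; apply: HS; exists (code phi).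
Qed.

End Lindenbaum.

Section HenkinChain.
Variables (P F C : Type) (pa : P -> nat) (fa : F -> nat).
Local Notation L2 := (@Lang P F (C + nat) pa fa).
Variable code : form L2 -> nat.
Hypothesis code_inj : injective code.
Variable H0 : theory L2.
Hypotheses (H0_sc : strongly_consistent H0) (H0_old : bounded H0 0).

Definition pair_code (p : nat * form L2) : nat := pickle (p.1, code p.2).

Definition pair_of (m : nat) : nat * form L2 :=
  epsilon (inhabits (0, Cst one_r)) (fun p => pair_code p = m).

Lemma pair_code_inj : injective pair_code.
Proof. by move=> [x a] [y b] /(pcan_inj pickleK) [-> /code_inj ->]. Qed.

Lemma pair_of_code p : pair_of (pair_code p) = p.
Proof. by apply: pair_code_inj; apply: (epsilon_spec _ (fun q => pair_code q = _)); exists p. Qed.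

(* [stage_bound m] bounds the new constants used before stage [m] and those of
   the formula handled at stage [m]. *)
Fixpoint stage_bound m : nat :=
  match m with
  | 0 => cbound (pair_of 0).2
  | k.+1 => (stage_bound k).+1 + cbound (pair_of k.+1).2
  end.

Lemma cbound_pair_of m : cbound (pair_of m).2 <= stage_bound m.
Proof. by case: m => [|m] /=; lia. Qed.

Lemma stage_bound_lt m : stage_bound m < stage_bound m.+1.
Proof. by rewrite /=; lia. Qed.

Fixpoint henkin_chain m : theory L2 :=
  match m with
  | 0 => H0
  | k.+1 => extend (henkin_chain k)
      (henkin_add (henkin_chain k) (pair_of k).1 (pair_of k).2 (stage_bound k))
  end.

Definition henkin_union : theory L2 := fun psi => exists m, henkin_chain m psi.

Lemma henkin_chain_bounded m : bounded (henkin_chain m) (stage_bound m).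
Proof.
elim: m => [|m IH] psi /=; first by move/H0_old; rewrite leqn0 => /eqP ->.
have Hm := stage_bound_lt m.
case=> [/IH Hpsi|->]; first exact: leq_trans Hpsi (ltnW Hm).
apply: leq_trans (cbound_henkin_add _ _ _ _) _.
by rewrite geq_max Hm andbT (leq_trans (cbound_pair_of m) (ltnW Hm)).
Qed.

Lemma henkin_chain_sc m : strongly_consistent (henkin_chain m).
Proof.
elim: m => [|m IH] //=; apply: henkin_add_sc IH _ (cbound_pair_of m).
exact: henkin_chain_bounded.
Qed.

Lemma henkin_union_sc : strongly_consistent henkin_union.
Proof. by apply: sc_chain_union => [m psi|]; [left|apply: henkin_chain_sc]. Qed.

Lemma henkin_union_witnessed : witnessed henkin_union.
Proof.
move=> x phi; set m := pair_code (x, phi).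
have : henkin_chain m.+1 (henkin_add (henkin_chain m) x phi (stage_bound m)).
  by right; rewrite /m pair_of_code.
case: (henkin_add_spec (henkin_chain m) x phi (stage_bound m)) => [->|[r [Hr ->]]] H.
  by left; exists m.+1.
by right; exists (stage_bound m), r; split=> //; exists m.+1.
Qed.

End HenkinChain.

Section NewConstants.
Variables (P F C : Type) (pa : P -> nat) (fa : F -> nat).
Local Notation L := (@Lang P F C pa fa).
Local Notation L2 := (@Lang P F (C + nat) pa fa).

Definition const_emb : lang_emb L L2.
Proof.
refine (@Build_lang_emb L L2 id id inl _ _ _ (fun p => erefl) (fun f => erefl)).
- by move=> ? ?.
- by move=> ? ?.
- by move=> ? ? [].
Defined.

Definition emb_theory (T : theory L) : theory L2 :=
  fun psi => exists phi, T phi /\ psi = tr const_emb phi.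

Lemma emb_theory_old T : bounded (emb_theory T) 0.
Proof.
have Ht (t : term L) : cbound_t (tr_t const_emb t) = 0.
  elim: t => [n|c|f a IH] //=; apply/eqP; rewrite -leqn0.
  by apply/bigmax_leqP => i _; rewrite IH.
move=> _ [phi [_ ->]]; rewrite leqn0; apply/eqP.
elim: phi => [p a|r|a IHa b IHb|a IHa b IHb|y a IHa|y a IHa] //=; try by rewrite ?IHa ?IHb.
by apply/eqP; rewrite -leqn0; apply/bigmax_leqP => i _; rewrite Ht.
Qed.

Definition new_to_var N (d : C + nat) : term L :=
  match d with inl c => @Cnst L c | inr j => Var (N + j) end.

Lemma csubst_new_to_var_tr N phi : csubst (new_to_var N) (tr const_emb phi) = phi.
Proof.
have Ht (t : term L) : csubst_t (new_to_var N) (tr_t const_emb t) = t.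
  elim: t => [n|c|f a IH] //=; congr App.
  by apply: functional_extensionality => i; rewrite cast_ord_id IH.
elim: phi => [p a|r|a IHa b IHb|a IHa b IHb|y a IHa|y a IHa] /=; try by rewrite ?IHa ?IHb.
by congr Atom; apply: functional_extensionality => i; rewrite cast_ord_id Ht.
Qed.

Lemma emb_theory_sc T : strongly_consistent T -> strongly_consistent (emb_theory T).
Proof.
move=> SC r Hr /(prov_csubst T) [N HN]; apply: (SC r Hr); apply: (HN (new_to_var N)).
  by move=> [c|j] y //= ->; apply: leq_addr.
by move=> _ [phi [Hphi ->]]; rewrite csubst_new_to_var_tr.
Qed.

Definition sum_code (gc : C -> nat) (d : C + nat) : nat :=
  pickle (match d with inl c => inl (gc c) | inr n => @inr nat nat n end).

Lemma sum_code_inj gc : injective gc -> injective (sum_code gc).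
Proof.
move=> gc_inj [c|n] [c'|n'] /(pcan_inj pickleK) //=; first by case=> /gc_inj ->.
by case=> ->.
Qed.

End NewConstants.

Theorem mainTheorem10 (L : lang) (T : theory L) :
  countable_lang L -> strongly_consistent T ->
  exists (L' : lang) (e : lang_emb L L') (T' : theory L'),
    countable_lang L' /\ max_strongly_consistent T' /\ henkin T' /\
    (forall phi, T phi -> T' (tr e phi)).
Proof.
move: T; case: L => P F C pa fa T [[gp gp_inj] [[gf gf_inj] [gc gc_inj]]] SCT.
pose L2 := @Lang P F (C + nat) pa fa.
have gc'_inj := sum_code_inj gc_inj.
pose code := @form_code L2 gp gf (sum_code gc).
have code_inj : injective code := @form_code_inj L2 _ _ _ gp_inj gf_inj gc'_inj.
pose H := henkin_union code (emb_theory T).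
have H_sc : strongly_consistent H.
  exact: henkin_union_sc (emb_theory_sc SCT) (@emb_theory_old _ _ _ _ _ T).
have H_sub := @lindenbaum_sub _ code H.
exists L2, (@const_emb P F C pa fa), (lindenbaum code H).
split; [|split; [|split]].
- by split; [exists gp|split; [exists gf|exists (sum_code gc)]].
- exact: lindenbaum_max.
- apply: henkin_of_witnessed (proj1 (lindenbaum_max code_inj H_sc)).
  exact: witnessed_sub H_sub (henkin_union_witnessed _ _).
- by move=> phi Tphi; apply: H_sub; exists 0, phi.
Qed.
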